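(* Let $\mathbb{X}$ be a reflexive Kadets-Klee real Banach space and $\mathbb{Y}$ a smooth real Banach space (both of dimension greater than $1$). Let $T\in\mathbb{K}(\mathbb{X},\mathbb{Y})$ be nonzero. Then $T$ is a smooth point of $\mathbb{K}(\mathbb{X},\mathbb{Y})$ if and only if there exists $x_0\in S_{\mathbb{X}}$ such that for every $\epsilon>0$ there exists $\delta(\epsilon)>0$ such that for every $0<\delta\le\delta(\epsilon)$ (with $\delta<\|T\|$), \[M_T(\delta)\subseteq B(x_0,\epsilon)\cup B(-x_0,\epsilon).\] Moreover, the ''if'' direction holds without assuming that $\mathbb{X}$ is Kadets-Klee.
   Context: $\mathbb{K}(\mathbb{X},\mathbb{Y})$ is the Banach space of compact linear operators from $\mathbb{X}$ to $\mathbb{Y}$ with the operator norm. $S_{\mathbb{X}}$ is the unit sphere; $B(x,r)$ is the open ball of centre $x$ and radius $r$. A nonzero element $x$ of a Banach space $\mathbb{Z}$ is a smooth point if there is a unique $f\in\mathbb{Z}^*$ with $\|f\|=1$ and $f(x)=\|x\|$; a Banach space is smooth if every nonzero point is smooth. $\mathbb{X}$ is Kadets-Klee if whenever $x_n\to x$ weakly and $\|x_n\|\to\|x\|$, then $\|x_n-x\|\to0$. For nonzero $T$ and $0<\delta<\|T\|$, $M_T(\delta)=\{x\in S_{\mathbb{X}}:\|Tx\|>\|T\|-\delta\}$. *)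

From HB Require Import structures.
From mathcomp Require Import all_boot all_order all_algebra.
From mathcomp Require Import all_classical all_reals all_analysis.
Set Implicit Arguments. Unset Strict Implicit. Unset Printing Implicit Defensive.
Import Order.TTheory GRing.Theory Num.Theory.
Import numFieldNormedType.Exports.
Local Open Scope ring_scope.
Local Open Scope classical_set_scope.

Section Defs.
Context {R : realType}.

Definition is_linear {U V : normedModType R} (T : U -> V) : Prop :=
  (forall x y, T (x + y) = T x + T y) /\ (forall (a : R) x, T (a *: x) = a *: T x).

Definition cball1 (U : normedModType R) : set U := [set x | `|x| <= 1].
Definition sphere1 (U : normedModType R) : set U := [set x | `|x| = 1].
Definition oball {U : normedModType R} (x : U) (r : R) : set U :=
  [set y | `|y - x| < r].

Definition opnorm {U V : normedModType R} (T : U -> V) : R :=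
  sup [set `|T x| | x in @cball1 U].

Definition blf {U : normedModType R} (f : U -> R) : Prop :=
  (forall x y, f (x + y) = f x + f y) /\ (forall (a : R) x, f (a *: x) = a * f x) /\
  exists C : R, forall x, `|f x| <= C * `|x|.
Definition fnorm {U : normedModType R} (f : U -> R) : R :=
  sup [set `|f x| | x in @cball1 U].

Definition dim_gt1 (U : normedModType R) : Prop :=
  exists x y : U, forall a b : R, a *: x + b *: y = 0 -> a = 0 /\ b = 0.

(* reflexivity: every bounded linear functional on U^* is evaluation at
   some point of U (the canonical embedding U -> U^** is onto) *)
Definition reflexive_space (U : normedModType R) : Prop :=
  forall Phi : (U -> R) -> R,
    (forall f g, blf f -> blf g -> Phi (fun x => f x + g x) = Phi f + Phi g) ->
    (forall (a : R) f, blf f -> Phi (fun x => a * f x) = a * Phi f) ->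
    (exists C : R, forall f, blf f -> `|Phi f| <= C * fnorm f) ->
    exists x : U, forall f, blf f -> Phi f = f x.

Definition weak_cvg {U : normedModType R} (u : nat -> U) (x : U) : Prop :=
  forall f : U -> R, blf f -> (fun n => f (u n)) @ \oo --> f x.

Definition kadets_klee (U : normedModType R) : Prop :=
  forall (u : nat -> U) (x : U), weak_cvg u x ->
    (fun n => `|u n|) @ \oo --> `|x| ->
    (fun n => `|u n - x|) @ \oo --> (0 : R).

Definition supporting {U : normedModType R} (z : U) (f : U -> R) : Prop :=
  blf f /\ fnorm f = 1 /\ f z = `|z|.
Definition smooth_point {U : normedModType R} (z : U) : Prop :=
  z != 0 /\ (exists f, supporting z f) /\
  (forall f g, supporting z f -> supporting z g -> f = g).
Definition smooth_space (U : normedModType R) : Prop :=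
  forall z : U, z != 0 -> smooth_point z.

Definition compact_op {U V : normedModType R} (T : U -> V) : Prop :=
  is_linear T /\ compact (closure (T @` @cball1 U)).

Definition Kblf {U V : normedModType R} (Phi : (U -> V) -> R) : Prop :=
  (forall S S', compact_op S -> compact_op S' ->
     Phi (fun x => S x + S' x) = Phi S + Phi S') /\
  (forall (a : R) S, compact_op S -> Phi (fun x => a *: S x) = a * Phi S) /\
  exists C : R, forall S, compact_op S -> `|Phi S| <= C * opnorm S.
Definition Kfnorm {U V : normedModType R} (Phi : (U -> V) -> R) : R :=
  sup [set `|Phi S| | S in [set S : U -> V | compact_op S /\ opnorm S <= 1]].
Definition Ksupporting {U V : normedModType R} (T : U -> V) (Phi : (U -> V) -> R)
  : Prop := Kblf Phi /\ Kfnorm Phi = 1 /\ Phi T = opnorm T.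
(* T is a smooth point of K(U,V); functionals are identified when they agree on K(U,V) *)
Definition smooth_point_K {U V : normedModType R} (T : U -> V) : Prop :=
  T <> (fun _ => 0) /\ (exists Phi, Ksupporting T Phi) /\
  (forall Phi Psi, Ksupporting T Phi -> Ksupporting T Psi ->
     forall S, compact_op S -> Phi S = Psi S).

Definition M_T {U V : normedModType R} (T : U -> V) (delta : R) : set U :=
  [set x | `|x| = 1 /\ opnorm T - delta < `|T x|].

End Defs.

(* If the condition holds, [x0] norms [T].  Given a functional [Psi]
   supporting [T] in the dual of K(X,Y) and a compact [S], the points almost
   norming [T + t S] lie in some [M_T(delta)], hence near [x0] or [- x0], and a
   functional [h_t] norming [(T + t S) x] satisfies [Psi S <= h_t (S x) + t].
   A weak-* cluster point of the [h_t] norms [T x0], so by smoothness of Y it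
   is the support functional [g] of [T x0]; thus [Psi S <= g (S x0)] for all
   [S], i.e. [Psi = (S |-> g (S x0))] and [T] is smooth.

   Conversely, in a reflexive space a maximizing sequence of [T] has a weak
   limit, which compactness of [T] makes a norming point.  If [T] is smooth its
   norming points are [+- x0]: two of them give two supporting functionals
   [S |-> g (S x)], which differ on some rank-one operator unless the points
   agree up to sign.  So every maximizing sequence, with signs fixed by a
   functional norming [x0], converges weakly to [x0]; Kadets-Klee makes the
   convergence strong, which is the condition.

   Compactness arguments (Banach-Alaoglu, weak compactness of the ball) are
   replaced by limits along ultrafilters on [nat] finer than the cofinite
   filter. *)

From HB Require Import structures.
From mathcomp Require Import all_boot all_order all_algebra.
From mathcomp Require Import all_classical all_reals all_analysis.
From mathcomp Require Import ring lra.
Set Implicit Arguments.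
Unset Strict Implicit.
Unset Printing Implicit Defensive.
Import Order.TTheory GRing.Theory Num.Theory.
Import numFieldNormedType.Exports.
Local Open Scope ring_scope.
Local Open Scope classical_set_scope.

(** * Norming functionals (Hahn-Banach) *)

Section NormingFunctional.
Context {R : realType} {X : normedModType R}.

(* Partial functionals are encoded by their graphs, so that Zorn's lemma can
   run over sets ordered by inclusion. *)
Definition norm_dominated_graph (G : set (X * R)) : Prop :=
  [/\ G (0, 0), (forall x a y b, G (x, a) -> G (y, b) -> G (x + y, a + b)),
      (forall k x a, G (x, a) -> G (k *: x, k * a)) &
      (forall x a, G (x, a) -> a <= `|x|)].

Lemma norm_dominated_graph_fun G x a b :
  norm_dominated_graph G -> G (x, a) -> G (x, b) -> a = b.
Proof.
case=> _ GD GZ Gle Ga Gb.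
have := Gle _ _ (GD _ _ _ _ Ga (GZ (-1) _ _ Gb)).
have := Gle _ _ (GD _ _ _ _ Gb (GZ (-1) _ _ Ga)).
rewrite scaleN1r subrr normr0; lra.
Qed.

Definition graph_adjoin (G : set (X * R)) (z : X) (c : R) : set (X * R) :=
  [set p | exists x a t, G (x, a) /\ p = (x + t *: z, a + t * c)].

Lemma graph_adjoin_sub G z c : G `<=` graph_adjoin G z c.
Proof. by move=> [x a] Gxa; exists x, a, 0; rewrite scale0r mul0r !addr0. Qed.

Lemma graph_adjoin_point G z c : G (0, 0) -> graph_adjoin G z c (z, c).
Proof. by move=> G0; exists 0, 0, 1; rewrite scale1r mul1r !add0r. Qed.

Lemma graph_adjoin_dominated G z c : norm_dominated_graph G ->
  (forall x a, G (x, a) -> a - `|x - z| <= c) ->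
  (forall y b, G (y, b) -> c <= `|y + z| - b) ->
  norm_dominated_graph (graph_adjoin G z c).
Proof.
move=> [G0 GD GZ Gle] cge cle; split.
- exact: graph_adjoin_sub.
- move=> _ _ _ _ [x1 [a1 [t1 [G1 [-> ->]]]]] [x2 [a2 [t2 [G2 [-> ->]]]]].
  exists (x1 + x2), (a1 + a2), (t1 + t2); split; first exact: GD.
  by congr pair; [rewrite scalerDl addrACA|rewrite mulrDl addrACA].
- move=> k _ _ [x [a [t [Gxa [-> ->]]]]].
  exists (k *: x), (k * a), (k * t); split; first exact: GZ.
  by rewrite scalerDr scalerA mulrDr mulrA.
move=> _ _ [x [a [t [Gxa [-> ->]]]]].
have [t0|t0|->] := ltgtP t 0; last by rewrite scale0r mul0r !addr0; exact: Gle.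
- have tN0 : 0 < - t by rewrite oppr_gt0.
  have := cge _ _ (GZ (- t)^-1 _ _ Gxa).
  have -> : (- t)^-1 *: x - z = (- t)^-1 *: (x + t *: z).
    by rewrite scalerDr scalerA invrN mulNr mulVf ?lt_eqF // scaleN1r.
  rewrite normrZ gtr0_norm ?invr_gt0 // => h.
  have := ler_wpM2l (ltW tN0) h.
  by rewrite mulrBr !mulrA mulfV ?lt0r_neq0 // !mul1r; lra.
- have := cle _ _ (GZ t^-1 _ _ Gxa).
  have -> : t^-1 *: x + z = t^-1 *: (x + t *: z).
    by rewrite scalerDr scalerA mulVf ?gt_eqF // scale1r.
  rewrite normrZ gtr0_norm ?invr_gt0 // => h.
  have := ler_wpM2l (ltW t0) h.
  by rewrite mulrBr !mulrA mulfV ?gt_eqF // !mul1r; lra.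
Qed.

Lemma norm_dominated_graph_adjoin G z : norm_dominated_graph G ->
  exists c, norm_dominated_graph (graph_adjoin G z c).
Proof.
move=> GG; case: (GG) => G0 GD _ Gle.
pose lower := [set d | exists x a, G (x, a) /\ d = a - `|x - z|].
have lower_ub y b : G (y, b) -> ubound lower (`|y + z| - b).
  move=> Gyb _ [x [a [Gxa ->]]].
  have := Gle _ _ (GD _ _ _ _ Gxa Gyb).
  have := ler_normD (x - z) (y + z).
  have -> : x - z + (y + z) = x + y by rewrite addrACA addNr addr0.
  lra.
have lower_sup : has_sup lower.
  split; first by exists (0 - `|0 - z|), 0, 0.
  by exists (`|0 + z| - 0); apply: lower_ub.
exists (sup lower); apply: graph_adjoin_dominated => //.
  by move=> x a Gxa; apply: sup_upper_bound => //; exists x, a.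
by move=> y b Gyb; apply: ge_sup; [case: lower_sup|apply: lower_ub].
Qed.

Lemma norm_dominated_graph_bigcup (F : set (set (X * R))) :
  (exists2 G, F G & G (0, 0)) -> (forall G p, F G -> G p -> norm_dominated_graph G) ->
  total_on F subset -> norm_dominated_graph (\bigcup_(G in F) G).
Proof.
move=> [G1 FG1 G10] FG Ftot; split; first by exists G1.
- move=> x a y b [Ga FGa Ga_xa] [Gb FGb Gb_yb].
  have [sab|sba] := Ftot _ _ FGa FGb.
    by exists Gb => //; have [_ GD _ _] := FG _ _ FGb Gb_yb; apply: GD => //; exact: sab.
  by exists Ga => //; have [_ GD _ _] := FG _ _ FGa Ga_xa; apply: GD => //; exact: sba.
- move=> k x a [Ga FGa Ga_xa]; exists Ga => //.
  by have [_ _ GZ _] := FG _ _ FGa Ga_xa; apply: GZ.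
- by move=> x a [Ga FGa Ga_xa]; have [_ _ _ Gle] := FG _ _ FGa Ga_xa; apply: Gle.
Qed.

Lemma norm_dominated_graph_total G0 : norm_dominated_graph G0 ->
  exists G, [/\ norm_dominated_graph G, G0 `<=` G & forall z, exists c, G (z, c)].
Proof.
move=> GG0.
(* [set0] is admitted so that the union of the empty chain qualifies. *)
pose P (G : set (X * R)) := G = set0 \/ (norm_dominated_graph G /\ G0 `<=` G).
have [G [PG Gmax]] : exists G, P G /\ forall B, G `<` B -> ~ P B.
  apply: Zorn_bigcup => F FP Ftot.
  have Fgraph G p : F G -> G p -> norm_dominated_graph G /\ G0 `<=` G.
    by move=> FGG Gp; case: (FP _ FGG) => // G_0; rewrite G_0 in Gp.
  case: (pselect (exists G p, F G /\ G p)) => [[G1 [p [FG1 G1p]]]|F0]; last first.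
    by left; apply/seteqP; split => // p [G FGG Gp]; apply: F0; exists G, p.
  right; have [[G10 _ _ _] sG1] := Fgraph _ _ FG1 G1p; split.
    apply: norm_dominated_graph_bigcup => // [|G q FGq Gq]; first by exists G1.
    by case: (Fgraph _ _ FGq Gq).
  by move=> q /sG1 G1q; exists G1.
have [GG sG] : norm_dominated_graph G /\ G0 `<=` G.
  case: PG => // G_0; exfalso; apply: (Gmax G0); last by right; split.
  rewrite G_0; split => // /(_ (0, 0)) G00.
  by case: GG0 => GG00 _ _ _; have [] := G00 GG00.
exists G; split => // z; have [c Gc] := norm_dominated_graph_adjoin z GG.
exists c; apply: contrapT => Nzc; apply: (Gmax (graph_adjoin G z c)).
  split; first exact: graph_adjoin_sub.
  by move=> /(_ (z, c)) Gzc; apply/Nzc/Gzc/graph_adjoin_point; case: GG.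
by right; split => // q /sG; apply: graph_adjoin_sub.
Qed.

Definition norming (v : X) (f : X -> R) : Prop :=
  [/\ blf f, forall x, `|f x| <= `|x| & f v = `|v|].

Lemma norming_functional (v : X) : exists f, norming v f.
Proof.
pose G0 : set (X * R) := [set p | exists t : R, p = (t *: v, t * `|v|)].
have GG0 : norm_dominated_graph G0.
  split.
  - by exists 0; rewrite scale0r mul0r.
  - move=> _ _ _ _ [t [-> ->]] [s [-> ->]]; exists (t + s).
    by rewrite scalerDl mulrDl.
  - by move=> k _ _ [t [-> ->]]; exists (k * t); rewrite scalerA mulrA.
  - by move=> _ _ [t [-> ->]]; rewrite normrZ ler_wpM2r // ler_norm.
have [G [GG sG Gtot]] := norm_dominated_graph_total GG0.
have [f Gf] := choice Gtot.
have fE x a : G (x, a) -> f x = a by move=> Gxa; exact: norm_dominated_graph_fun GG (Gf x) Gxa.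
case: GG => _ GD GZ Gle.
have fD x y : f (x + y) = f x + f y by apply/fE/GD.
have fZ k x : f (k *: x) = k * f x by apply/fE/GZ.
have fle x : `|f x| <= `|x|.
  rewrite ler_norml Gle ?andbT //.
  by have := Gle _ _ (Gf (-1 *: x)); rewrite fZ scaleN1r normrN; lra.
exists f; split => //; last by apply/fE/sG; exists 1; rewrite scale1r mul1r.
by split => //; split => //; exists 1 => x; rewrite mul1r.
Qed.

Lemma blf_separates (v : X) : (forall f : X -> R, blf f -> f v = 0) -> v = 0.
Proof.
move=> h; have [f [fblf _ fv]] := norming_functional v.
by apply/eqP; rewrite -normr_eq0 -fv h.
Qed.

End NormingFunctional.

(** * Operator norms and compact operators *)

Section SupBall.
Context {R : realType} {X : normedModType R}.
Variable g : X -> R.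
Hypothesis gZ : forall k x, g (k *: x) = `|k| * g x.
Let E := [set g x | x in @cball1 R X].

Let g0 : g 0 = 0.
Proof. by rewrite -(scale0r (0 : X)) gZ normr0 mul0r. Qed.

Let E_neq0 : E !=set0.
Proof. by exists (g 0), 0 => //; rewrite /cball1 /= normr0. Qed.

Lemma sup_ball_ub x : has_ubound E -> `|x| <= 1 -> g x <= sup E.
Proof. by move=> Eub x1; apply: sup_upper_bound; [split|exists x]. Qed.

Lemma sup_ball_homog x : has_ubound E -> g x <= sup E * `|x|.
Proof.
move=> Eub; have [->|x0] := eqVneq x 0; first by rewrite g0 normr0 mulr0.
have nx : 0 < `|x| by rewrite normr_gt0.
have := @sup_ball_ub (`|x|^-1 *: x) Eub.
rewrite normrZ normfV normr_id mulVf ?gt_eqF // lexx => /(_ isT).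
by rewrite gZ normfV normr_id -(ler_pM2r nx) mulrAC mulVf ?gt_eqF // mul1r.
Qed.

Lemma sup_ball_le M : (forall x, `|x| <= 1 -> g x <= M) -> sup E <= M.
Proof. by move=> gM; apply: ge_sup => // _ [x x1 <-]; apply: gM. Qed.

Lemma sup_ball_adherent eps : has_ubound E -> 0 < eps ->
  exists x, `|x| <= 1 /\ sup E - eps < g x.
Proof.
move=> Eub eps0; have [_ [x x1 <-] gx] := sup_adherent eps0 (conj E_neq0 Eub).
by exists x.
Qed.

End SupBall.

Section Operators.
Context {R : realType} {U V : normedModType R}.

Definition bounded_op (T : U -> V) : Prop :=
  is_linear T /\ has_ubound [set `|T x| | x in @cball1 R U].

Lemma is_linear0 (T : U -> V) : is_linear T -> T 0 = 0.
Proof. by case=> _ TZ; rewrite -(scale0r (0 : U)) TZ scale0r. Qed.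

Lemma is_linearN (T : U -> V) x : is_linear T -> T (- x) = - T x.
Proof. by case=> _ TZ; rewrite -scaleN1r TZ scaleN1r. Qed.

Lemma is_linearB (T : U -> V) x y : is_linear T -> T (x - y) = T x - T y.
Proof. by move=> lT; rewrite lT.1 is_linearN. Qed.

Lemma compact_op_bounded (T : U -> V) : compact_op T -> bounded_op T.
Proof.
case=> lT /compact_bounded [M [_ HM]]; split => //.
exists (`|M| + 1) => _ [x x1 <-].
by apply: HM; [rewrite (le_lt_trans (ler_norm M)) ?ltrDl|exact: subset_closure].
Qed.

Variable T : U -> V.

Let normTZ : is_linear T -> forall k x, `|T (k *: x)| = `|k| * `|T x|.
Proof. by move=> [_ TZ] k x; rewrite TZ normrZ. Qed.

Lemma opnorm_ub x : bounded_op T -> `|x| <= 1 -> `|T x| <= opnorm T.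
Proof. by move=> [lT Tub]; exact: (@sup_ball_ub _ _ (fun y => `|T y|) x Tub). Qed.

Lemma opnorm_bound x : bounded_op T -> `|T x| <= opnorm T * `|x|.
Proof.
by move=> [lT Tub]; exact: (@sup_ball_homog _ _ (fun y => `|T y|) (normTZ lT) x Tub).
Qed.

Lemma opnorm_le M : (forall x, `|x| <= 1 -> `|T x| <= M) -> opnorm T <= M.
Proof. exact: (@sup_ball_le _ _ (fun x => `|T x|)). Qed.

Lemma opnorm_ge0 : bounded_op T -> 0 <= opnorm T.
Proof. by move=> bT; apply: le_trans (@opnorm_ub 0 bT _); rewrite ?normr0. Qed.

Lemma opnorm_gt0 : bounded_op T -> T <> (fun _ => 0) -> 0 < opnorm T.
Proof.
move=> bT T0; rewrite lt_neqAle opnorm_ge0 // andbT; apply/eqP => T_0.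
apply/T0/funext => x; apply/eqP; rewrite -normr_le0.
by have := @opnorm_bound x bT; rewrite -T_0 mul0r.
Qed.

Lemma opnorm_adherent d : bounded_op T -> 0 < d -> d <= opnorm T ->
  exists x, `|x| = 1 /\ opnorm T - d < `|T x|.
Proof.
move=> [lT Tub] d0 dT.
have [x [x1 Tx]] := @sup_ball_adherent _ _ (fun y => `|T y|) _ Tub d0.
rewrite -/(opnorm T) in Tx.
have x0 : x != 0.
  apply/eqP => x_0; move: Tx; rewrite x_0 is_linear0 // normr0; lra.
exists (`|x|^-1 *: x); split; first by rewrite normrZ normfV normr_id mulVf ?normr_eq0.
rewrite normTZ // normfV normr_id; apply: lt_le_trans Tx _.
by rewrite ler_peMl // invf_ge1 // normr_gt0.
Qed.

End Operators.

Lemma opnormZ_le {R : realType} {U V : normedModType R} (T : U -> V) k :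
  bounded_op T -> opnorm (fun x => k *: T x) <= `|k| * opnorm T.
Proof.
move=> bT; apply: opnorm_le => x x1; rewrite normrZ ler_wpM2l //.
exact: opnorm_ub.
Qed.

Section Functionals.
Context {R : realType} {X : normedModType R}.
Implicit Types (f : X -> R) (x y : X).

Lemma blfD f x y : blf f -> f (x + y) = f x + f y.
Proof. by case. Qed.

Lemma blfZ f k x : blf f -> f (k *: x) = k * f x.
Proof. by case=> _ []. Qed.

Lemma blfN f x : blf f -> f (- x) = - f x.
Proof. by move=> fblf; rewrite -scaleN1r blfZ // mulN1r. Qed.

Lemma blfB f x y : blf f -> f (x - y) = f x - f y.
Proof. by move=> fblf; rewrite blfD // blfN. Qed.

Let blf_ubound f : blf f -> has_ubound [set `|f x| | x in @cball1 R X].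
Proof.
case=> _ [_ [C fC]]; exists `|C| => _ [x x1 <-].
apply: le_trans (fC x) _; rewrite (le_trans (ler_norm _)) // normrM normr_id.
by rewrite ler_piMr.
Qed.

Let normfZ f : blf f -> forall k x, `|f (k *: x)| = `|k| * `|f x|.
Proof. by move=> fblf k x; rewrite blfZ // normrM. Qed.

Lemma blf_le_fnorm f x : blf f -> `|x| <= 1 -> `|f x| <= fnorm f.
Proof. by move=> /blf_ubound fub; exact: (@sup_ball_ub _ _ (fun y => `|f y|) x fub). Qed.

Lemma blf_bound f x : blf f -> `|f x| <= fnorm f * `|x|.
Proof.
move=> fblf.
exact: (@sup_ball_homog _ _ (fun y => `|f y|) (normfZ fblf) x (blf_ubound fblf)).
Qed.

Lemma fnorm_le f M : (forall x, `|x| <= 1 -> `|f x| <= M) -> fnorm f <= M.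
Proof. exact: (@sup_ball_le _ _ (fun x => `|f x|)). Qed.

Lemma fnorm_ge0 f : blf f -> 0 <= fnorm f.
Proof. by move=> fblf; apply: le_trans (@blf_le_fnorm f 0 fblf _); rewrite ?normr0. Qed.

Lemma supporting_norming z f : supporting z f -> norming z f.
Proof.
case=> fblf [f1 fz]; split => // x.
by have := @blf_bound f x fblf; rewrite f1 mul1r.
Qed.

Lemma norming_supporting z f : z != 0 -> norming z f -> supporting z f.
Proof.
move=> z0 [fblf fle fz]; split => //; split => //.
apply/eqP; rewrite eq_le fnorm_le /=; last by move=> x x1; exact: le_trans (fle x) x1.
have := @blf_le_fnorm f (`|z|^-1 *: z) fblf.
rewrite normrZ normfV normr_id mulVf ?normr_eq0 // lexx => /(_ isT).
by rewrite blfZ // fz normrM normfV !normr_id mulVf ?normr_eq0.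
Qed.

Lemma blf_cvg (I : Type) (F : set_system I) {FF : Filter F} (u : I -> X) f y :
  blf f -> u @ F --> y -> (fun n => f (u n)) @ F --> f y.
Proof.
move=> fblf uy; apply/cvgrPdist_le => eps eps0.
have fn0 := fnorm_ge0 fblf.
have p : 0 < eps / (fnorm f + 1) by rewrite divr_gt0 // ltr_wpDl.
move/cvgrPdist_le: uy => /(_ _ p); apply: filterS => n un.
rewrite -blfB //; apply: le_trans (blf_bound _ fblf) _.
apply: le_trans (ler_wpM2l fn0 un) _.
rewrite mulrA ler_pdivrMr ?ltr_wpDl //; nra.
Qed.

End Functionals.

Lemma subset_compact_closure {R : realType} (Z : normedModType R) (A K : set Z) :
  compact K -> A `<=` K -> compact (closure A).
Proof.
move=> cK AK; apply: (subclosed_compact _ cK); first exact: closed_closure.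
have cl : closed K by apply: compact_closed => //; exact: norm_hausdorff.
by rewrite [X in _ `<=` X](closure_id K).1 //; apply: closureS.
Qed.

Section CompactOperators.
Context {R : realType} {X Y : normedModType R}.

Lemma compact_opZ (S : X -> Y) k : compact_op S -> compact_op (fun x => k *: S x).
Proof.
case=> [[SD SZ] cS]; split.
  split; first by move=> x y; rewrite SD scalerDr.
  by move=> a x; rewrite SZ !scalerA mulrC.
apply: (subset_compact_closure (K := (fun y => k *: y) @` closure (S @` @cball1 R X))).
  apply: continuous_compact => //; apply: continuous_subspaceT.
  exact: scaler_continuous.
by move=> _ [x x1 <-]; exists (S x) => //; apply: subset_closure; exists x.
Qed.

Lemma compact_opD (S S' : X -> Y) : compact_op S -> compact_op S' ->
  compact_op (fun x => S x + S' x).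
Proof.
case=> [[SD SZ] cS] [[SD' SZ'] cS']; split.
  split; first by move=> x y; rewrite SD SD' addrACA.
  by move=> a x; rewrite SZ SZ' scalerDr.
apply: (subset_compact_closure (K := (fun z : Y * Y => z.1 + z.2) @`
   (closure (S @` @cball1 R X) `*` closure (S' @` @cball1 R X)))).
  apply: continuous_compact; last exact: compact_setX.
  by apply: continuous_subspaceT; exact: add_continuous.
by move=> _ [x x1 <-]; exists (S x, S' x) => //; split; apply: subset_closure; exists x.
Qed.

Lemma compact_op_rank1 (f : X -> R) (y : Y) : blf f -> compact_op (fun x => f x *: y).
Proof.
move=> fblf; have [fD [fZ [C fC]]] := fblf; split.
  split; first by move=> a b; rewrite fD scalerDl.
  by move=> a x; rewrite fZ scalerA.
apply: (subset_compact_closure (K := (fun t : R => t *: y) @` `[- `|C|, `|C|])).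
  apply: continuous_compact; last exact: segment_compact.
  by apply: continuous_subspaceT => t; exact: scalel_continuous.
move=> _ [x x1 <-]; exists (f x) => //.
rewrite /= in_itv /= -ler_norml; apply: le_trans (fC x) _.
by rewrite (le_trans (ler_norm _)) // normrM normr_id ler_piMr.
Qed.

Lemma Kblf_le_opnorm (Psi : (X -> Y) -> R) S : Kblf Psi -> Kfnorm Psi = 1 ->
  compact_op S -> `|Psi S| <= opnorm S.
Proof.
move=> [PD [PZ [C PC]]] P1 cS; have bS := compact_op_bounded cS.
have [S0|S_gt0] := eqVneq (opnorm S) 0; first by have := PC _ cS; rewrite S0 mulr0.
have Sp : 0 < opnorm S by rewrite lt_neqAle eq_sym S_gt0 opnorm_ge0.
pose k := (opnorm S)^-1.
have ckS := compact_opZ k cS.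
have kS1 : opnorm (fun x => k *: S x) <= 1.
  by apply: le_trans (opnormZ_le k bS) _; rewrite /k normfV gtr0_norm // mulVf ?gt_eqF.
have ub : has_ubound [set `|Psi S| | S in [set S | compact_op S /\ opnorm S <= 1]].
  exists `|C| => _ [S' [cS' S'1] <-]; apply: le_trans (PC _ cS') _.
  rewrite (le_trans (ler_norm _)) // normrM ler_piMr //.
  by rewrite ger0_norm // opnorm_ge0 //; exact: compact_op_bounded.
have := sup_upper_bound (conj (ex_intro _ _ (ex_intro2 _ _ _ (conj ckS kS1) erefl)) ub)
  (ex_intro2 _ _ _ (conj ckS kS1) erefl).
rewrite -/(Kfnorm Psi) P1 PZ // normrM /k normfV (gtr0_norm Sp).
by rewrite ler_pdivrMl // mulr1.
Qed.

Lemma Ksupporting_eval (T : X -> Y) x g : compact_op T -> `|x| = 1 ->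
  `|T x| = opnorm T -> 0 < opnorm T -> supporting (T x) g ->
  Ksupporting T (fun S => g (S x)).
Proof.
move=> cT x1 Tx Tp gs; have gblf := gs.1.
have gTx : g (T x) = opnorm T by rewrite gs.2.2 Tx.
have gS S : compact_op S -> `|g (S x)| <= opnorm S.
  move=> cS; have [_ gle _] := supporting_norming gs; apply: le_trans (gle _) _.
  by apply: opnorm_ub; [exact: compact_op_bounded|rewrite x1].
split; last split => //.
  split; first by move=> S S' _ _; rewrite blfD.
  split; first by move=> a S _; rewrite blfZ.
  by exists 1 => S cS; rewrite mul1r; apply: gS.
pose k := (opnorm T)^-1.
have ckT := compact_opZ k cT.
have kT1 : opnorm (fun x => k *: T x) <= 1.
  apply: le_trans (opnormZ_le k (compact_op_bounded cT)) _.
  by rewrite /k normfV gtr0_norm // mulVf ?gt_eqF.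
have gkT : `|g (k *: T x)| = 1 by rewrite blfZ // gTx /k mulVf ?gt_eqF // normr1.
apply/eqP; rewrite eq_le; apply/andP; split.
  apply: ge_sup; first by exists 1, (fun x => k *: T x).
  by move=> _ [S [cS S1] <-]; apply: le_trans (gS S cS) S1.
rewrite -gkT; apply: sup_upper_bound; last by exists (fun x => k *: T x).
split; first by exists 1, (fun x => k *: T x).
by exists 1 => _ [S [cS S1] <-]; apply: le_trans (gS S cS) S1.
Qed.

(* Compare [Psi (T + t S) <= opnorm (T + t S)] with the value of [h] at the
   almost norming point [x], then divide by [t]. *)
Lemma Ksupporting_le_perturbed (T S : X -> Y) Psi t x h :
  compact_op T -> compact_op S -> Ksupporting T Psi -> 0 < t -> `|x| = 1 ->
  opnorm (fun y => T y + t *: S y) - t * t < `|T x + t *: S x| ->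
  norming (T x + t *: S x) h -> Psi S <= h (S x) + t.
Proof.
move=> cT cS [Pblf [P1 PT]] t0 x1 Ax [hblf hle hA].
have ctS := compact_opZ t cS; have cA := compact_opD cT ctS.
have PA : Psi (fun y => T y + t *: S y) <= opnorm (fun y => T y + t *: S y).
  exact: le_trans (ler_norm _) (Kblf_le_opnorm Pblf P1 cA).
have [PD [PZ _]] := Pblf; rewrite PD // PZ // PT in PA.
have hTx : h (T x) <= opnorm T.
  apply: le_trans (ler_norm _) (le_trans (hle _) _).
  by apply: opnorm_ub; [exact: compact_op_bounded|rewrite x1].
rewrite -hA (blfD _ _ hblf) (blfZ t (S x) hblf) in Ax.
have : t * Psi S < t * (h (S x) + t) by rewrite mulrDr; lra.
by rewrite ltr_pM2l // => /ltW.
Qed.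

End CompactOperators.

(** * Limits along ultrafilters *)

Lemma ultrafilter_frequently (A : set nat) :
  (forall N, exists n, (N <= n)%N /\ A n) ->
  exists U : set_system nat, [/\ UltraFilter U, \oo `<=` U & U A].
Proof.
move=> Afreq; pose D N := [set n | (N <= n)%N /\ A n].
have DF : Filter (filter_from setT D).
  apply: filter_from_filter; first by exists 0%N.
  move=> i j _ _; exists (maxn i j) => // n [+ An].
  by rewrite geq_max => /andP[].
have DP : ProperFilter (filter_from setT D).
  by apply: filter_from_proper => // i _; have [n ?] := Afreq i; exists n.
have [U [UU sU]] := ultraFilterLemma DP.
exists U; split => //; last by apply: sU; exists 0%N => // n [].
by move=> B [N _ NB]; apply: sU; exists N => // n [nN _]; exact: NB.
Qed.

Lemma ultrafilter_oo : exists U : set_system nat, UltraFilter U /\ \oo `<=` U.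
Proof.
have [U [UF Uoo _]] := @ultrafilter_frequently setT (fun N => ex_intro _ N (conj (leqnn N) I)).
by exists U.
Qed.

Lemma ultra_compact_cvg {I : Type} {Z : topologicalType} (U : set_system I)
    (UF : UltraFilter U) (z : I -> Z) (K : set Z) :
  compact K -> (forall i, K (z i)) -> exists l : Z, z @ U --> l.
Proof.
move=> cK Kz.
have UK : U (z @^-1` K).
  suff -> : z @^-1` K = setT by exact: filterT.
  by apply/seteqP; split => // i _.
have [l [Kl cl]] := cK (z @ U) _ UK.
exists l => B /= Bl.
have [//|nB] := in_ultra_setVsetC (z @^-1` B) UF.
by have [y [] /= ? ?] := cl (~` B) B nB Bl.
Qed.

Lemma cvgr_ge_err {R : realType} {I : Type} (F : set_system I) {FF : ProperFilter F}
    (a e : I -> R) l c :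
  a @ F --> l -> e @ F --> 0 -> (forall i, c <= a i + e i) -> c <= l.
Proof.
move=> al e0 cle; have ae : (a + e) @ F --> l + 0 by exact: cvgD.
by rewrite addr0 in ae; apply: (cvgr_to_ge ae); apply: nearW.
Qed.

Section UltraLimit.
Context {R : realType} {I : Type} (U : set_system I) {UF : UltraFilter U}.

Lemma ultra_bounded_cvg (a : I -> R) M : (forall i, `|a i| <= M) -> a @ U --> lim (a @ U).
Proof.
move=> aM; have Ka i : `[- M, M] (a i) by rewrite /= in_itv /= -ler_norml.
have [l al] := ultra_compact_cvg UF (@segment_compact R (- M) M) Ka.
by rewrite (cvg_lim _ al).
Qed.

Lemma ultralimit_functional {Y : normedModType R} (h : I -> Y -> R) :
  (forall i, blf (h i)) -> (forall i y, `|h i y| <= `|y|) ->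
  exists h0 : Y -> R, [/\ blf h0, forall y, `|h0 y| <= `|y| &
    forall y, (fun i => h i y) @ U --> h0 y].
Proof.
move=> hblf hle; pose h0 y := lim ((fun i => h i y) @ U).
have hcvg y : (fun i => h i y) @ U --> h0 y := ultra_bounded_cvg (hle ^~ y).
have h0D y z : h0 (y + z) = h0 y + h0 z.
  apply: cvg_lim; first exact: norm_hausdorff.
  have -> : (fun i => h i (y + z)) = (fun i => h i y + h i z).
    by apply: funext => i; rewrite blfD.
  exact: cvgD.
have h0Z k y : h0 (k *: y) = k * h0 y.
  apply: cvg_lim; first exact: norm_hausdorff.
  have -> : (fun i => h i (k *: y)) = (fun i => k * h i y).
    by apply: funext => i; rewrite blfZ.
  exact: cvgMl_tmp.
have h0le y : `|h0 y| <= `|y|.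
  by apply: (cvgr_to_le (cvg_norm (hcvg y))); apply: nearW => i; exact: hle.
exists h0; split => //; split => //; split => //.
by exists 1 => y; rewrite mul1r.
Qed.

Lemma reflexive_weak_ultralimit {X : normedModType R} (u : I -> X) :
  reflexive_space X -> (forall i, `|u i| <= 1) ->
  exists w, forall f, blf f -> (fun i => f (u i)) @ U --> f w.
Proof.
move=> rX u1; pose Phi (f : X -> R) : R := lim ((fun i => f (u i)) @ U).
have fu f : blf f -> forall i, `|f (u i)| <= fnorm f by move=> fblf i; exact: blf_le_fnorm.
have Phi_cvg f : blf f -> (fun i => f (u i)) @ U --> Phi f.
  by move=> fblf; exact: ultra_bounded_cvg (fu f fblf).
suff [w Phiw] : exists w, forall f, blf f -> Phi f = f w.
  by exists w => f fblf; rewrite -Phiw //; exact: Phi_cvg.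
apply: rX.
- move=> f g fblf gblf; apply: cvg_lim; first exact: norm_hausdorff.
  by exact: cvgD (Phi_cvg f fblf) (Phi_cvg g gblf).
- move=> a f fblf; apply: cvg_lim; first exact: norm_hausdorff.
  by exact: cvgMl_tmp (Phi_cvg f fblf).
exists 1 => f fblf; rewrite mul1r.
by apply: (cvgr_to_le (cvg_norm (Phi_cvg f fblf))); apply: nearW; exact: fu.
Qed.

End UltraLimit.

(** * The condition implies smoothness *)

Section IfDirection.
Context {R : realType} {X Y : normedModType R}.
Variables (T : X -> Y) (x0 : X).
Hypotheses (cT : compact_op T) (T0 : T <> (fun _ => 0)) (x01 : `|x0| = 1)
  (M_T_x0 : forall eps : R, 0 < eps -> exists d0 : R, 0 < d0 /\
        forall delta : R, 0 < delta -> delta <= d0 -> delta < opnorm T ->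
          M_T T delta `<=` oball x0 eps `|` oball (- x0) eps).

Let bT := compact_op_bounded cT.
Let Tp : 0 < opnorm T := opnorm_gt0 bT T0.

Lemma M_T_near_x0 eps : 0 < eps -> exists d1, 0 < d1 /\ forall delta x, 0 < delta ->
  delta <= d1 -> M_T T delta x -> `|x - x0| < eps \/ `|x + x0| < eps.
Proof.
move=> eps0; have [d0 [d00 M_Td0]] := M_T_x0 eps0.
exists (Num.min d0 (opnorm T / 2)); split; first by rewrite lt_min d00 divr_gt0.
move=> d x d_gt0; rewrite le_min => /andP[dd0 dT] Mx.
have dlt : d < opnorm T by apply: le_lt_trans dT _; have := Tp; lra.
by case: (M_Td0 d d_gt0 dd0 dlt x Mx); rewrite /oball /= ?opprK; [left|right].
Qed.

Lemma opnorm_attained_x0 : `|T x0| = opnorm T.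
Proof.
have T_gt0 := Tp.
apply/eqP; rewrite eq_le opnorm_ub ?x01 //=; apply/ler_addgt0Pr => e e0.
pose eps := e / (2 * (opnorm T + 1)).
have eps0 : 0 < eps by rewrite divr_gt0 //; lra.
have Teps : opnorm T * eps <= e / 2.
  rewrite /eps mulrA ler_pdivrMr; [nra|lra].
have [d1 [d10 near_x0]] := M_T_near_x0 eps0.
pose d := Num.min d1 (Num.min (e / 2) (opnorm T)).
have d0 : 0 < d by rewrite !lt_min d10 Tp andbT; lra.
have dd1 : d <= d1 by rewrite ge_min lexx.
have de : d <= e / 2 by rewrite /d !ge_min lexx orbT.
have dT : d <= opnorm T by rewrite /d !ge_min lexx !orbT.
have [x [x1 Tx]] := opnorm_adherent bT d0 dT.
(* Either [x] or [- x] is within [eps] of [x0], and [T] is [opnorm T]-Lipschitz. *)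
have near_Tx0 z : `|z| <= eps -> `|T (x0 + z)| <= `|T x0| + e / 2.
  move=> zeps; rewrite bT.1.1; apply: le_trans (ler_normD _ _) _; rewrite lerD2l.
  apply: le_trans (opnorm_bound _ bT) _; apply: le_trans Teps.
  by rewrite ler_wpM2l // ltW.
case: (near_x0 d x d0 dd1 (conj x1 Tx)) => [xx0|xx0].
- have := near_Tx0 (x - x0) (ltW xx0); rewrite addrC subrK; lra.
- have := near_Tx0 (- (x + x0)); rewrite normrN => /(_ (ltW xx0)).
  rewrite opprD addrCA subrr addr0 (is_linearN _ bT.1) normrN; lra.
Qed.

Lemma perturbation_norming_near_x0 S e : compact_op S -> 0 < e -> e <= 1 ->
  exists t x, [/\ 0 < t, t <= e, `|x| = 1, `|x - x0| < e &
    opnorm (fun y => T y + t *: S y) - t * t < `|T x + t *: S x|].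
Proof.
move=> cS e0 e1; have T_gt0 := Tp; have bS := compact_op_bounded cS.
pose nS := opnorm S; have nS0 : 0 <= nS := opnorm_ge0 bS.
have [d1 [d10 near_x0]] := M_T_near_x0 e0.
pose c := 2 * nS + 2; have c0 : 0 < c by rewrite /c; lra.
pose t := Num.min e (Num.min (d1 / c) (opnorm T / c)).
have t0 : 0 < t by rewrite !lt_min e0 !divr_gt0.
have te : t <= e by rewrite ge_min lexx.
have tc1 : t * c <= d1 by rewrite -ler_pdivlMr // !ge_min lexx orbT.
have tc2 : t * c <= opnorm T by rewrite -ler_pdivlMr // !ge_min lexx !orbT.
have tcE : t * c = t * nS * 2 + t * 2 by rewrite /c; ring.
have tt : t * t <= t by have := le_trans te e1; nra.
pose A y := T y + t *: S y.
have bA : bounded_op A := compact_op_bounded (compact_opD cT (compact_opZ t cS)).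
have TA : opnorm T <= opnorm A + t * nS.
  apply: opnorm_le => y y1.
  have -> : T y = A y - t *: S y by rewrite /A addrK.
  apply: le_trans (ler_normB _ _) _; rewrite normrZ gtr0_norm //.
  by apply: lerD; [exact: opnorm_ub|rewrite ler_pM2l //; exact: opnorm_ub].
have ttA : t * t <= opnorm A by lra.
have [x [x1 Ax]] := opnorm_adherent bA (mulr_gt0 t0 t0) ttA.
have tSx : t * `|S x| <= t * nS by rewrite ler_pM2l // opnorm_ub ?x1.
have Ax_le : `|A x| <= `|T x| + t * `|S x|.
  by apply: le_trans (ler_normD _ _) _; rewrite normrZ gtr0_norm.
(* [x] almost norms [T] too, so [x] or [- x] is close to [x0]. *)
pose d := t * nS * 2 + t.
have Mx : M_T T d x by split => //; rewrite /d; lra.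
have [x' [x'1 x'x0 Ax']] : exists x', [/\ `|x'| = 1, `|x' - x0| < e & `|A x'| = `|A x|].
  have d0 : 0 < d by rewrite /d; nra.
  have dd1 : d <= d1 by rewrite /d; lra.
  case: (near_x0 d x d0 dd1 Mx) => xx0; first by exists x.
  exists (- x); split; [by rewrite normrN|by rewrite -opprD normrN|].
  by rewrite /A (is_linearN _ bT.1) (is_linearN _ bS.1) scalerN -opprD normrN.
by exists t, x'; split => //; rewrite -/(A x') Ax'.
Qed.

Lemma Ksupporting_approx_functional Psi S e : Ksupporting T Psi -> compact_op S ->
  0 < e -> e <= 1 -> exists h : Y -> R, [/\ blf h, forall y, `|h y| <= `|y|,
    `|T x0| <= h (T x0) + 2 * (opnorm T + opnorm S) * e &
    Psi S <= h (S x0) + (opnorm S + 1) * e].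
Proof.
move=> PK cS e0 e1; have bS := compact_op_bounded cS.
have [t [x [t0 te x1 xx0 Ax]]] := perturbation_norming_near_x0 cS e0 e1.
pose y := T x + t *: S x; have [h hy] := norming_functional y.
have PSh := Ksupporting_le_perturbed cT cS PK t0 x1 Ax hy.
have [hblf hle hyy] := hy.
have Sx : `|S x| <= opnorm S by apply: opnorm_ub; rewrite ?x1.
have y_near : `|y - T x0| <= (opnorm T + opnorm S) * e.
  have -> : y - T x0 = T (x - x0) + t *: S x by rewrite (is_linearB _ _ bT.1) addrAC.
  apply: le_trans (ler_normD _ _) _; rewrite normrZ gtr0_norm // mulrDl.
  apply: lerD.
    by apply: le_trans (opnorm_bound _ bT) _; rewrite ler_wpM2l ?opnorm_ge0 ?ltW.
  by rewrite mulrC; apply: ler_pM => //; exact: ltW.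
exists h; split => //.
  have := hle (y - T x0); have := ler_normB y (y - T x0).
  rewrite opprB addrC subrK (blfB _ _ hblf) hyy ler_norml => ? /andP[? ?]; lra.
have Sxx0 : `|S x - S x0| <= opnorm S * e.
  rewrite -(is_linearB _ _ bS.1); apply: le_trans (opnorm_bound _ bS) _.
  by rewrite ler_wpM2l ?opnorm_ge0 ?ltW.
have := hle (S x - S x0); rewrite (blfB _ _ hblf) ler_norml mulrDl mul1r.
move=> /andP[? ?]; lra.
Qed.

Lemma Ksupporting_le_eval Psi S g : Ksupporting T Psi -> compact_op S ->
  supporting (T x0) g -> (forall h, supporting (T x0) h -> h = g) ->
  Psi S <= g (S x0).
Proof.
move=> PK cS gs g_uniq.
have e1 n : harmonic n <= 1 :> R by rewrite /= invf_le1 ?ler1n ?ltr0n.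
have [hs hsP] := choice (fun n =>
  Ksupporting_approx_functional PK cS (harmonic_gt0 n) (e1 n)).
have [U [UF Uoo]] := ultrafilter_oo.
have [hblf hle] : (forall n, blf (hs n)) /\ (forall n y, `|hs n y| <= `|y|).
  by split => n; case: (hsP n).
have [h [hblf0 hle0 hcvg]] := ultralimit_functional (U := U) hblf hle.
have err K : (fun n => K * harmonic n) @ U --> (0 : R).
  rewrite -(mulr0 K); apply: cvgMl_tmp => B /cvg_harmonic; exact: Uoo.
have hTx0 : h (T x0) = `|T x0|.
  apply/eqP; rewrite eq_le (le_trans (ler_norm _) (hle0 _)) /=.
  apply: (cvgr_ge_err (hcvg _) (err (2 * (opnorm T + opnorm S)))) => n.
  by case: (hsP n).
have -> : g = h.
  apply/esym/g_uniq/norming_supporting; last by split.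
  by rewrite -normr_gt0 opnorm_attained_x0 Tp.
apply: (cvgr_ge_err (hcvg _) (err (opnorm S + 1))) => n.
by case: (hsP n).
Qed.

Lemma Ksupporting_eval_x0 Psi S g : Ksupporting T Psi -> compact_op S ->
  supporting (T x0) g -> (forall h, supporting (T x0) h -> h = g) ->
  Psi S = g (S x0).
Proof.
move=> PK cS gs g_uniq; apply/eqP; rewrite eq_le Ksupporting_le_eval //=.
have := Ksupporting_le_eval PK (compact_opZ (-1) cS) gs g_uniq.
have [[_ [PZ _]] _] := PK; rewrite PZ // (blfZ _ _ gs.1); lra.
Qed.

Lemma smooth_point_K_of_M_T : smooth_space Y -> smooth_point_K T.
Proof.
move=> sY; have Tx0 : T x0 != 0 by rewrite -normr_gt0 opnorm_attained_x0 Tp.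
have [_ [[g gs] g_uniq]] := sY _ Tx0.
have g_unique h : supporting (T x0) h -> h = g by move=> hs; exact: g_uniq.
split => //; split.
  by exists (fun S => g (S x0)); apply: Ksupporting_eval; rewrite ?opnorm_attained_x0.
move=> Phi Psi PhiK PsiK S cS.
by rewrite (Ksupporting_eval_x0 PhiK cS gs g_unique) (Ksupporting_eval_x0 PsiK cS gs g_unique).
Qed.

End IfDirection.

(** * Smoothness implies the condition *)

Section OnlyIfDirection.
Context {R : realType} {X Y : normedModType R}.
Variable T : X -> Y.
Hypotheses (rX : reflexive_space X) (sY : smooth_space Y) (cT : compact_op T)
  (sK : smooth_point_K T).

Let bT := compact_op_bounded cT.
Let Tp : 0 < opnorm T := opnorm_gt0 bT sK.1.

Lemma weak_ultralimit_norming {I : Type} (U : set_system I) {UF : UltraFilter U}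
    (u : I -> X) w :
  (forall i, `|u i| = 1) -> (fun i => `|T (u i)|) @ U --> opnorm T ->
  (forall f, blf f -> (fun i => f (u i)) @ U --> f w) ->
  `|w| = 1 /\ `|T w| = opnorm T.
Proof.
move=> u1 Tu uw.
have Tu_cl i : closure (T @` @cball1 R X) (T (u i)).
  by apply: subset_closure; exists (u i); rewrite /cball1 /= ?u1.
have [y Tuy] := ultra_compact_cvg UF cT.2 Tu_cl.
have gT g : blf g -> blf (fun x => g (T x)).
  move=> gblf; split; first by move=> a b; rewrite bT.1.1 blfD.
  split; first by move=> a b; rewrite bT.1.2 blfZ.
  exists (fnorm g * opnorm T) => x; apply: le_trans (blf_bound _ gblf) _.
  by rewrite -mulrA ler_wpM2l ?fnorm_ge0 // opnorm_bound.
have yTw : y = T w.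
  apply/eqP; rewrite -subr_eq0; apply/eqP/blf_separates => g gblf.
  rewrite blfB //; apply/eqP; rewrite subr_eq0; apply/eqP.
  exact: cvg_unique (blf_cvg gblf Tuy) (uw _ (gT g gblf)).
have Tw : `|T w| = opnorm T by rewrite -yTw; exact: cvg_unique (cvg_norm Tuy) Tu.
split => //; apply/eqP; rewrite eq_le; apply/andP; split.
  have [f [fblf fle fw]] := norming_functional w.
  rewrite -fw; apply: (cvgr_to_le (uw _ fblf)); apply: nearW => i.
  by rewrite -(u1 i); exact: le_trans (ler_norm _) (fle _).
by have := opnorm_bound w bT; rewrite Tw -{1}(mulr1 (opnorm T)) ler_pM2l.
Qed.

(* Two norming points give two supporting functionals [S |-> g (S x)] of [T];
   testing them on the rank-one operators [f (.) *: T w] separates [w] from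
   multiples of [v] unless [w = +- v]. *)
Lemma norming_points_opp w v : `|w| = 1 -> `|T w| = opnorm T ->
  `|v| = 1 -> `|T v| = opnorm T -> v = w \/ v = - w.
Proof.
move=> w1 Tw v1 Tv; have T_gt0 := Tp.
have Tw0 : T w != 0 by rewrite -normr_gt0 Tw.
have Tv0 : T v != 0 by rewrite -normr_gt0 Tv.
have [_ [[gw gws] _]] := sY Tw0; have [_ [[gv gvs] _]] := sY Tv0.
have Kw := Ksupporting_eval cT w1 Tw T_gt0 gws.
have Kv := Ksupporting_eval cT v1 Tv T_gt0 gvs.
pose lam := gv (T w) / opnorm T.
have wv : w = lam *: v.
  apply/eqP; rewrite -subr_eq0; apply/eqP/blf_separates => f fblf.
  have := sK.2.2 _ _ Kw Kv _ (compact_op_rank1 (T w) fblf) => /=.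
  rewrite (blfZ _ _ gws.1) (blfZ _ _ gvs.1) gws.2.2 Tw => fwv.
  rewrite blfB // blfZ // /lam.
  have -> : f w = f v * gv (T w) / opnorm T by rewrite -fwv mulfK ?gt_eqF.
  ring.
have : `|lam| = 1 by move: w1; rewrite wv normrZ v1 mulr1.
case: (lerP 0 lam) => [lam0|lam0]; [rewrite ger0_norm // | rewrite ltr0_norm //] => lam1.
  by left; rewrite wv lam1 scale1r.
by right; rewrite wv -[lam]opprK lam1 scaleN1r opprK.
Qed.

Lemma maximizing_weak_ultralimit (U : set_system nat) {UF : UltraFilter U}
    (u : nat -> X) :
  \oo `<=` U -> (forall n, `|u n| = 1) ->
  (forall n, opnorm T - harmonic n < `|T (u n)|) ->
  exists w, [/\ `|w| = 1, `|T w| = opnorm T &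
    forall f, blf f -> (fun n => f (u n)) @ U --> f w].
Proof.
move=> Uoo u1 uT.
have u1_le n : `|u n| <= 1 by rewrite u1.
have [w uw] := reflexive_weak_ultralimit (U := U) rX u1_le.
have Tu : (fun n => `|T (u n)|) @ U --> opnorm T.
  apply: (squeeze_cvgr (f := fun n => opnorm T - harmonic n) (h := fun=> opnorm T)).
  - by apply: nearW => n; rewrite (ltW (uT n)) /= opnorm_ub // u1.
  - rewrite -[X in _ --> X]subr0; apply: cvgB; first exact: cvg_cst.
    by move=> B /cvg_harmonic; exact: Uoo.
  - exact: cvg_cst.
by have [w1 Tw] := weak_ultralimit_norming u1 Tu uw; exists w.
Qed.

Lemma exists_maximizing_sequence : exists u : nat -> X,
  (forall n, `|u n| = 1) /\ (forall n, opnorm T - harmonic n < `|T (u n)|).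
Proof.
have T_gt0 := Tp.
have near_max n : exists x, `|x| = 1 /\ opnorm T - harmonic n < `|T x|.
  pose d := Num.min (harmonic n) (opnorm T).
  have d0 : 0 < d by rewrite lt_min harmonic_gt0.
  have dT : d <= opnorm T by rewrite ge_min lexx orbT.
  have [x [x1 Tx]] := opnorm_adherent bT d0 dT.
  by exists x; split => //; apply: le_lt_trans Tx; rewrite lerB // ge_min lexx.
have [u uP] := choice near_max.
by exists u; split => n; case: (uP n).
Qed.

Lemma exists_norming_point : exists x0, `|x0| = 1 /\ `|T x0| = opnorm T.
Proof.
have [u [u1 uT]] := exists_maximizing_sequence.
have [U [UF Uoo]] := ultrafilter_oo.
by have [x0 [x01 Tx0 _]] := maximizing_weak_ultralimit Uoo u1 uT; exists x0.
Qed.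

Lemma maximizing_weak_cvg x0 f0 u : `|x0| = 1 -> `|T x0| = opnorm T ->
  norming x0 f0 -> (forall n, `|u n| = 1) ->
  (forall n, opnorm T - harmonic n < `|T (u n)|) -> (forall n, 0 <= f0 (u n)) ->
  weak_cvg u x0.
Proof.
move=> x01 Tx0 [f0blf _ f0x0] u1 uT uf0 f fblf; apply: contrapT => ucvg.
have [eta [eta0 far]] : exists eta : R, 0 < eta /\
    forall N, exists n, (N <= n)%N /\ eta < `|f x0 - f (u n)|.
  apply: contrapT => nfar; apply/ucvg/cvgrPdist_le => eta eta0.
  apply: contrapT => nnear; apply: nfar; exists eta; split => // N.
  apply: contrapT => nN; apply: nnear; exists N => // n /= Nn.
  by rewrite leNgt; apply/negP => etan; apply: nN; exists n.
(* Along an ultrafilter that keeps [u] far from [x0] under [f], the weak limit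
   of [u] is a norming point with [0 <= f0 w], hence equal to [x0]. *)
have [U [UF Uoo Ufar]] := ultrafilter_frequently far.
have [w [w1 Tw uw]] := maximizing_weak_ultralimit Uoo u1 uT.
have wx0 : w = x0.
  case: (norming_points_opp x01 Tx0 w1 Tw) => // wE.
  have : 0 <= f0 w by apply: (cvgr_to_ge (uw _ f0blf)); apply: nearW.
  by rewrite wE blfN // f0x0 x01 oppr_ge0 ler10.
move/cvgrPdist_lt: (uw _ fblf) => /(_ _ eta0); rewrite wx0 => near.
have [n [/= nfar nnear]] := filter_ex (filterI Ufar near).
by move: nfar; rewrite ltNge ltW.
Qed.

Lemma M_T_concentrates x0 : kadets_klee X -> `|x0| = 1 -> `|T x0| = opnorm T ->
  forall eps : R, 0 < eps -> exists d0 : R, 0 < d0 /\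
    forall delta : R, 0 < delta -> delta <= d0 -> delta < opnorm T ->
      M_T T delta `<=` oball x0 eps `|` oball (- x0) eps.
Proof.
move=> kk x01 Tx0 eps eps0; apply: contrapT => no_d0.
have far n : exists x, [/\ `|x| = 1, opnorm T - harmonic n < `|T x|,
    eps <= `|x - x0| & eps <= `|x + x0|].
  apply: contrapT => nfar; apply: no_d0; exists (harmonic n).
  split=> [|d d0 dn dT x [x1 Tx]]; first exact: harmonic_gt0.
  apply: contrapT => xfar; apply: nfar; exists x; split => //.
  - by apply: le_lt_trans Tx; rewrite lerB.
  - by rewrite leNgt; apply/negP => xx0; apply: xfar; left.
  - by rewrite leNgt; apply/negP => xx0; apply: xfar; right; rewrite /oball /= opprK.
have [xs xsP] := choice far.
have [f0 f0x0] := norming_functional x0; have [f0blf _ _] := f0x0.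
pose u n := if 0 <= f0 (xs n) then xs n else - xs n.
have u1 n : `|u n| = 1 by rewrite /u; case: ifP; rewrite ?normrN; case: (xsP n).
have uT n : opnorm T - harmonic n < `|T (u n)|.
  by rewrite /u; case: ifP; rewrite ?(is_linearN _ bT.1) ?normrN; case: (xsP n).
have ufar n : eps <= `|u n - x0|.
  rewrite /u; case: ifP => _; first by case: (xsP n).
  by rewrite -opprD normrN; case: (xsP n).
have uf0 n : 0 <= f0 (u n).
  by rewrite /u; case: ifP => // /negbT; rewrite -ltNge blfN // oppr_ge0 => /ltW.
have unorm : (fun n => `|u n|) @ \oo --> `|x0|.
  by rewrite (funext u1) x01; exact: cvg_cst.
have ux0 := kk _ _ (maximizing_weak_cvg x01 Tx0 f0x0 u1 uT uf0) unorm.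
have : eps <= 0 by apply: (cvgr_to_ge ux0); apply: nearW.
lra.
Qed.

End OnlyIfDirection.

Theorem theorem2p3 (R : realType) (X Y : completeNormedModType R) (T : X -> Y) :
  reflexive_space X -> dim_gt1 X -> dim_gt1 Y -> smooth_space Y ->
  compact_op T -> T <> (fun _ => 0) ->
  let cond := exists x0 : X, x0 \in @sphere1 R X /\
      forall eps : R, 0 < eps -> exists d0 : R, 0 < d0 /\
        forall delta : R, 0 < delta -> delta <= d0 -> delta < opnorm T ->
          M_T T delta `<=` oball x0 eps `|` oball (- x0) eps in
  (kadets_klee X -> (smooth_point_K T <-> cond)) /\ (cond -> smooth_point_K T).
Proof.
move=> rX _ _ sY cT T0 cond.
have if_dir : cond -> smooth_point_K T.
  by move=> [x0 [/set_mem x01 M_T_x0]]; exact: smooth_point_K_of_M_T cT T0 x01 M_T_x0 sY.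
split => // kk; split => // sK.
have [x0 [x01 Tx0]] := exists_norming_point rX cT sK.
by exists x0; split; [exact: mem_set|exact: M_T_concentrates].
Qed.
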